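(* Consider the sequential decision problem described in the context. (1) Given $\mathbf q=(q_1,\dots,q_T)\in\mathcal Q_B$, let $f_t(y^{t-1})=q_t(\cdot\mid\cdot,\cdot,y^{t-1})$; then $\tilde L_T(\mathbf f)=L_T(\mathbf q)$. (2) Given a decision policy $\mathbf f=(f_1,\dots,f_T)$, let $\mathbf q\in\mathcal Q_B$ be $q_t(y_t\mid x_t,s_t,y^{t-1})=a_t(y_t\mid x_t,s_t)$ with $a_t=f_t(y^{t-1})$; then $L_T(\mathbf q)=\tilde L_T(\mathbf f)$. Hence the sequential problem is equivalent to minimizing $L_T$ over $\mathcal Q_B$.
   Context: Let $\mathcal X=\{0,\dots,m_x\}$, $\mathcal Y=\{0,\dots,m_y\}$, $\mathcal S=\{0,\dots,m_s\}$ with $m_x\le m_y$. The demand $\{X_t\}$ is a time-homogeneous first-order Markov chain on $\mathcal X$ with transition matrix $Q$ and initial pmf $P_{X_1}$; $S_1\sim P_{S_1}$ independent of $\{X_t\}$. For an integer $w$ let $\mathcal Y_\circ(w)=\{y\in\mathcal Y:w+y\in\mathcal S\}$. $\mathcal Q_B$ is the set of charging policies $q_t(y\mid x_t,s_t,y^{t-1})$ (conditional pmfs on $\mathcal Y$ with $q_t(\mathcal Y_\circ(s_t-x_t)\mid x_t,s_t,y^{t-1})=1$), inducing $Y_t\sim q_t(\cdot\mid X_t,S_t,Y^{t-1})$, $S_{t+1}=S_t+Y_t-X_t$, and $L_T(\mathbf q)=\frac1TI^{\mathbf q}(X^T,S_1;Y^T)$. $\mathcal A$ is the set of conditional pmfs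 $a(y\mid x,s)$ with $a(\mathcal Y_\circ(s-x)\mid x,s)=1$ for all $(x,s)$. Sequential problem: a decision maker observes $Y^{t-1}$ and chooses $A_t=f_t(Y^{t-1})\in\mathcal A$; then $Y_t\sim A_t(\cdot\mid X_t,S_t)$ and $S_{t+1}=S_t+Y_t-X_t$. The per-step cost is $c_t(x_t,s_t,a_t,y^t;\mathbf f)=\log\frac{a_t(y_t\mid x_t,s_t)}{P^{\mathbf f}(Y_t=y_t\mid Y^{t-1}=y^{t-1})}$ and $\tilde L_T(\mathbf f)=\frac1T\mathbb E^{\mathbf f}\big[\sum_{t=1}^Tc_t(X_t,S_t,A_t,Y^t;\mathbf f)\big]$. *)

From HB Require Import structures.
From mathcomp Require Import all_boot all_order all_algebra.
From mathcomp Require Import reals exp.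
Set Implicit Arguments. Unset Strict Implicit. Unset Printing Implicit Defensive.
Import Order.TTheory GRing.Theory Num.Theory.
Local Open Scope ring_scope.

(* Alphabets: X = {0..mx}, Y = {0..my}, S = {0..ms}; times t = 1..T are
   encoded 0-indexed as t : 'I_T (time t+1), histories y^{t-1} as the list of
   the first t outputs. *)

Section Model.
Variables (R : realType) (mx my ms T : nat).
Local Notation X := 'I_mx.+1.
Local Notation Y := 'I_my.+1.
Local Notation S := 'I_ms.+1.

(* y \in Y_o(s - x)  <=>  0 <= s - x + y <= ms *)
Definition inYo (s x y : nat) : bool := (x <= s + y)%N && (s + y - x <= ms)%N.

Definition cond_pmf_A (a : X -> S -> Y -> R) : Prop :=
  forall (x : X) (s : S),
    (forall y, 0 <= a x s y) /\ \sum_(y : Y) a x s y = 1 /\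
    \sum_(y : Y | inYo s x y) a x s y = 1.

Definition in_QB (q : nat -> X -> S -> seq Y -> Y -> R) : Prop :=
  forall t : nat, (t < T)%N -> forall (h : seq Y), size h = t ->
    cond_pmf_A (fun x s y => q t x s h y).

Definition decision_policy (f : nat -> seq Y -> (X -> S -> Y -> R)) : Prop :=
  forall t : nat, (t < T)%N -> forall (h : seq Y), size h = t -> cond_pmf_A (f t h).

Definition is_pmf (I : finType) (p : I -> R) : Prop :=
  (forall i, 0 <= p i) /\ \sum_i p i = 1.

Definition stochastic (Q : X -> X -> R) : Prop := forall x, is_pmf (Q x).

Definition traj := ({ffun 'I_T -> X} * S * {ffun 'I_T -> Y})%type.

Definition seqf (A : Type) (u : {ffun 'I_T -> A}) : seq A := [seq u i | i <- enum 'I_T].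

Definition hist (ys : {ffun 'I_T -> Y}) (t : nat) : seq Y := take t (seqf ys).

(* S_{t+1} = S_t + Y_t - X_t, i.e. state at (0-indexed) time t *)
Definition stateZ (xs : {ffun 'I_T -> X}) (s1 : S) (ys : {ffun 'I_T -> Y}) (t : nat)
  : int := (s1 : nat)%:Z + \sum_(i < T | (i < t)%N) ((ys i : nat)%:Z - (xs i : nat)%:Z).

(* the state as an element of S (only used on trajectories where it lies in S;
   elsewhere the trajectory has probability 0) *)
Definition stateS xs s1 ys t : S := inord `|stateZ xs s1 ys t|%N.

Fixpoint chain_prob (Q : X -> X -> R) (prev : X) (l : seq X) : R :=
  if l is x :: l' then Q prev x * chain_prob Q x l' else 1.

Definition markov_prob (P1 : X -> R) (Q : X -> X -> R) (l : seq X) : R :=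
  if l is x :: l' then P1 x * chain_prob Q x l' else 1.

Variables (PX1 : X -> R) (Q : X -> X -> R) (PS1 : S -> R).

Definition Pq (q : nat -> X -> S -> seq Y -> Y -> R) (w : traj) : R :=
  let: (xs, s1, ys) := w in
  markov_prob PX1 Q (seqf xs) * PS1 s1 *
  \prod_(t < T) q t (xs t) (stateS xs s1 ys t) (hist ys t) (ys t).

Definition mutual_info (P : traj -> R) : R :=
  \sum_(w : traj)
    if 0 < P w then
      P w * ln (P w / ((\sum_(w' : traj | (w'.1 == w.1)) P w') *
                       (\sum_(w' : traj | (w'.2 == w.2)) P w')))
    else 0.

Definition L_T (q : nat -> X -> S -> seq Y -> Y -> R) : R :=
  (T%:R)^-1 * mutual_info (Pq q).

Definition Pf (f : nat -> seq Y -> (X -> S -> Y -> R)) (w : traj) : R :=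
  let: (xs, s1, ys) := w in
  markov_prob PX1 Q (seqf xs) * PS1 s1 *
  \prod_(t < T) (f t (hist ys t)) (xs t) (stateS xs s1 ys t) (ys t).

Definition PY_prefix (f : nat -> seq Y -> (X -> S -> Y -> R)) (t : nat) (ys : {ffun 'I_T -> Y}) : R :=
  \sum_(w : traj | hist w.2 t == hist ys t) Pf f w.

Definition cost (f : nat -> seq Y -> (X -> S -> Y -> R)) (t : 'I_T) (w : traj) : R :=
  let: (xs, s1, ys) := w in
  ln ((f t (hist ys t)) (xs t) (stateS xs s1 ys t) (ys t) /
      (PY_prefix f t.+1 ys / PY_prefix f t ys)).

Definition Ltilde_T (f : nat -> seq Y -> (X -> S -> Y -> R)) : R :=
  (T%:R)^-1 * \sum_(w : traj) (if 0 < Pf f w then Pf f w * \sum_(t < T) cost f t w else 0).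

End Model.

From HB Require Import structures.
From mathcomp Require Import all_boot all_order all_algebra.
From mathcomp Require Import reals exp.
From mathcomp Require Import zify.
Set Implicit Arguments. Unset Strict Implicit. Unset Printing Implicit Defensive.
Import Order.TTheory GRing.Theory Num.Theory.
Local Open Scope ring_scope.

(* Under a policy the joint law factors as
     P(x^T, s_1, y^T) = P(x^T) P(s_1) prod_t a_t(y_t | x_t, s_t),
   and summing the kernels a_t causally over y^T gives 1, so P(x^T, s_1) is the
   first two factors.  Hence the log-likelihood ratio in I(X^T, S_1; Y^T) is
   sum_t ln a_t(y_t | x_t, s_t) - ln P(y^T), and writing
   ln P(y^T) = sum_t ln (P(y^{t+1}) / P(y^t)) (chain rule, P(y^0) = 1) turns it
   into sum_t c_t.  Both parts of the theorem are this one identity, because a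
   charging policy and the decision policy read off it induce the same law. *)

Section CausalProduct.
Variables (R : realType) (T : nat) (A : finType).

Definition ffun_set (u : {ffun 'I_T -> A}) (t : 'I_T) (a : A) : {ffun 'I_T -> A} :=
  [ffun i => if i == t then a else u i].

Lemma ffun_set_lt (u : {ffun 'I_T -> A}) (t i : 'I_T) (a : A) :
  (i < t)%N -> ffun_set u t a i = u i.
Proof. by move=> it; rewrite ffunE ifN // -(inj_eq val_inj) neq_ltn it. Qed.

Variable G : 'I_T -> {ffun 'I_T -> A} -> R.
Hypothesis G_causal : forall (t : 'I_T) (v w : {ffun 'I_T -> A}),
  (forall i : 'I_T, (i <= t)%N -> v i = w i) -> G t v = G t w.
Hypothesis G_sum1 : forall (t : 'I_T) (u : {ffun 'I_T -> A}),
  \sum_a G t (ffun_set u t a) = 1.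

Local Notation agree_before k u v :=
  [forall i : 'I_T, (i < k)%N ==> ((v : {ffun 'I_T -> A}) i == u i)].

Lemma sum_prod_causal_from_T (u : {ffun 'I_T -> A}) :
  \sum_(v | agree_before T u v) \prod_(t : 'I_T | (T <= t)%N) G t v = 1.
Proof.
rewrite (eq_bigl (pred1 u)) => [|v]; last first.
  apply/forallP/eqP => [agree|-> i]; last by rewrite eqxx implybT.
  by apply/ffunP => i; have /implyP/(_ (ltn_ord i))/eqP := agree i.
by rewrite big_pred1_eq big_pred0 // => t; rewrite leqNgt ltn_ord.
Qed.

Lemma agree_before_set (k : 'I_T) (u v : {ffun 'I_T -> A}) (a : A) :
  agree_before k.+1 (ffun_set u k a) v = agree_before k u v && (v k == a).
Proof.
apply/forallP/andP => [agree|[/forallP agree /eqP vk] i].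
  split; last by have /implyP/(_ (ltnSn k)) := agree k; rewrite ffunE eqxx.
  apply/forallP => i; apply/implyP => ik.
  by rewrite -(ffun_set_lt u a ik); apply: (implyP (agree i)); exact: ltnW.
apply/implyP; rewrite ltnS leq_eqVlt => /orP[/eqP/val_inj ->|ik].
  by rewrite ffunE eqxx vk.
by rewrite ffun_set_lt //; exact: (implyP (agree i)).
Qed.

Lemma sum_prod_causal_from_step (k : 'I_T) :
  (forall u : {ffun 'I_T -> A},
     \sum_(v | agree_before k.+1 u v) \prod_(t : 'I_T | (k.+1 <= t)%N) G t v = 1) ->
  forall u : {ffun 'I_T -> A},
    \sum_(v | agree_before k u v) \prod_(t : 'I_T | (k <= t)%N) G t v = 1.
Proof.
move=> IH u.
rewrite (partition_big (fun v : {ffun 'I_T -> A} => v k) xpredT) //=.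
rewrite -[RHS](G_sum1 k u); apply: eq_bigr => a _.
rewrite -[G k _]mulr1 -[in RHS](IH (ffun_set u k a)) big_distrr /=.
apply: eq_big => [v|v]; first by rewrite agree_before_set.
move=> /andP[/forallP agree /eqP vk].
rewrite (bigD1 k) //=; congr (_ * _); last first.
  by apply: eq_bigl => t; rewrite ltn_neqAle andbC eq_sym.
apply: G_causal => i; rewrite leq_eqVlt => /orP[/eqP/val_inj ->|ik].
  by rewrite ffunE eqxx.
by rewrite ffun_set_lt //; apply/eqP/(implyP (agree i)).
Qed.

Lemma sum_prod_causal (u0 : {ffun 'I_T -> A}) : \sum_v \prod_t G t v = 1.
Proof.
suff from_k m k : (k + m = T)%N -> forall u : {ffun 'I_T -> A},
    \sum_(v | agree_before k u v) \prod_(t : 'I_T | (k <= t)%N) G t v = 1.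
  apply: eq_trans (from_k T 0%N (add0n T) u0).
  by apply: eq_big => [v|v _]; [apply/esym/forallP | apply: eq_bigl].
elim: m k => [|m IH] k km u.
  by rewrite addn0 in km; rewrite km; exact: sum_prod_causal_from_T.
have kT : (k < T)%N by lia.
by apply: (sum_prod_causal_from_step (k := Ordinal kT)); apply: IH; rewrite /= addSnnS.
Qed.

End CausalProduct.

Lemma ln_prod (R : realType) (I : finType) (F : I -> R) :
  (forall i, 0 < F i) -> ln (\prod_i F i) = \sum_i ln (F i).
Proof.
move=> F_gt0; suff [] : 0 < \prod_i F i /\ ln (\prod_i F i) = \sum_i ln (F i) by [].
apply: (big_ind2 (fun p s => 0 < p /\ ln p = s)) => [|p1 p2 s1 s2 [p1_gt0 <-] [p2_gt0 <-]|i _].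
- by rewrite ln1.
- by split; [exact: mulr_gt0 | apply: lnM; rewrite posrE].
- by split.
Qed.

Lemma prodr_gt0_factor (R : realType) (I : finType) (F : I -> R) (j : I) :
  (forall i, 0 <= F i) -> 0 < \prod_i F i -> 0 < F j.
Proof.
move=> F_ge0; rewrite (bigD1 j) //=.
by have := F_ge0 j; rewrite le_eqVlt => /orP[/eqP <-|//]; rewrite mul0r ltxx.
Qed.

Section Trajectories.
Variables (T : nat).

Lemma size_seqf (A : Type) (u : {ffun 'I_T -> A}) : size (seqf u) = T.
Proof. by rewrite size_map size_enum_ord. Qed.

Lemma nth_seqf (A : Type) d (u : {ffun 'I_T -> A}) (i : 'I_T) : nth d (seqf u) i = u i.
Proof. by rewrite /seqf (nth_map i) ?size_enum_ord // nth_ord_enum. Qed.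

Variable n : nat.
Local Notation A := 'I_n.+1.

Lemma size_hist (u : {ffun 'I_T -> A}) (t : nat) : (t <= T)%N -> size (hist u t) = t.
Proof. by move=> tT; rewrite /hist size_takel // size_seqf. Qed.

Lemma eq_hist (v w : {ffun 'I_T -> A}) (t : nat) :
  (forall i : 'I_T, (i < t)%N -> v i = w i) -> hist v t = hist w t.
Proof.
move=> vw; apply: (@eq_from_nth _ ord0); first by rewrite /hist !size_take !size_seqf.
move=> j; rewrite /hist size_take size_seqf => jlt.
have [jt jT] : (j < t)%N /\ (j < T)%N by move: jlt; case: ifP => tT jlt; split => //; lia.
by rewrite !nth_take // !(nth_seqf _ _ (Ordinal jT)) vw.
Qed.

Lemma hist0 (u : {ffun 'I_T -> A}) : hist u 0 = [::].
Proof. by rewrite /hist take0. Qed.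

Lemma eq_histT (u v : {ffun 'I_T -> A}) : (hist u T == hist v T) = (u == v).
Proof.
rewrite /hist !take_oversize ?size_seqf //; apply/eqP/eqP => [uv|-> //].
by apply/ffunP => i; rewrite -(nth_seqf (u i) u) uv nth_seqf.
Qed.

End Trajectories.

Lemma eq_stateS (mx my ms T : nat) xs (s1 : 'I_ms.+1) (v w : {ffun 'I_T -> 'I_my.+1}) t :
  (forall i : 'I_T, (i < t)%N -> v i = w i) ->
  stateS (mx := mx) xs s1 v t = stateS xs s1 w t.
Proof.
move=> vw; rewrite /stateS /stateZ.
by rewrite (eq_bigr (fun i => (w i : nat)%:Z - (xs i : nat)%:Z)) // => i /vw ->.
Qed.

Section MarkovChain.
Variables (R : realType) (mx T : nat).
Local Notation X := 'I_mx.+1.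
Variables (PX1 : X -> R) (Q : X -> X -> R).
Hypotheses (PX1_pmf : is_pmf PX1) (Q_stochastic : stochastic Q).

Definition markov_kernel (t : 'I_T) (v : {ffun 'I_T -> X}) : R :=
  match t with
  | Ordinal 0 _ => PX1 (v t)
  | Ordinal t'.+1 tT => Q (v (Ordinal (ltnW tT))) (v t)
  end.

Lemma chain_probE (d : X) x l :
  chain_prob Q x l = \prod_(i < size l) Q (nth d (x :: l) i) (nth d l i).
Proof. by elim: l x => [|y l IH] x /=; rewrite ?big_ord0 // big_ord_recl IH. Qed.

Lemma markov_probE (xs : {ffun 'I_T -> X}) :
  markov_prob PX1 Q (seqf xs) = \prod_t markov_kernel t xs.
Proof.
have expand l : markov_prob PX1 Q l = \prod_(0 <= i < size l)
    (if i is 0 then PX1 (nth ord0 l i) else Q (nth ord0 l i.-1) (nth ord0 l i)).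
  case: l => [|x l]; first by rewrite big_geq.
  by rewrite big_mkord big_ord_recl /= (chain_probE ord0).
rewrite expand size_seqf big_mkord; apply: eq_bigr => -[[|t] tT] _ /=.
  by rewrite (nth_seqf _ _ (Ordinal tT)).
by rewrite (nth_seqf _ _ (Ordinal tT)) (nth_seqf _ _ (Ordinal (ltnW tT))).
Qed.

Lemma markov_prob_ge0 l : 0 <= markov_prob PX1 Q l.
Proof.
case: l => [|x l] /=; rewrite ?ler01 // (chain_probE ord0).
by apply: mulr_ge0; [exact: PX1_pmf.1 | apply: prodr_ge0 => i _; exact: (Q_stochastic _).1].
Qed.

Lemma sum_markov_prob : \sum_(xs : {ffun 'I_T -> X}) markov_prob PX1 Q (seqf xs) = 1.
Proof.
under eq_bigr do rewrite markov_probE.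
apply: (sum_prod_causal _ _ [ffun=> ord0]) => [[[|t] tT] v w vw|[[|t] tT] u] /=.
- by rewrite vw.
- by rewrite !vw //= ltnW.
- by rewrite -PX1_pmf.2; apply: eq_bigr => a _; rewrite ffunE eqxx.
- rewrite -(Q_stochastic (u (Ordinal (ltnW tT)))).2; apply: eq_bigr => a _.
  by rewrite ffun_set_lt ?ffunE ?eqxx.
Qed.

End MarkovChain.

Section DecisionPolicy.
Variables (R : realType) (mx my ms T : nat).
Local Notation X := 'I_mx.+1.
Local Notation Y := 'I_my.+1.
Local Notation S := 'I_ms.+1.
Variables (PX1 : X -> R) (Q : X -> X -> R) (PS1 : S -> R).
Hypotheses (PX1_pmf : is_pmf PX1) (Q_stochastic : stochastic Q) (PS1_pmf : is_pmf PS1).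
Variable f : nat -> seq Y -> (X -> S -> Y -> R).
Hypothesis f_policy : decision_policy T f.

Local Notation P := (@Pf R mx my ms T PX1 Q PS1 f).
Local Notation PY := (@PY_prefix R mx my ms T PX1 Q PS1 f).

Definition policy_kernel (xs : {ffun 'I_T -> X}) (s1 : S) (t : 'I_T)
    (ys : {ffun 'I_T -> Y}) : R :=
  f t (hist ys t) (xs t) (stateS xs s1 ys t) (ys t).

Definition input_prob (xs : {ffun 'I_T -> X}) (s1 : S) : R :=
  markov_prob PX1 Q (seqf xs) * PS1 s1.

Lemma PfE xs s1 ys : P (xs, s1, ys) = input_prob xs s1 * \prod_t policy_kernel xs s1 t ys.
Proof. by []. Qed.

Lemma policy_kernel_ge0 xs s1 t ys : 0 <= policy_kernel xs s1 t ys.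
Proof. exact: (f_policy (ltn_ord t) (size_hist ys (ltnW (ltn_ord t))) (xs t) _).1. Qed.

Lemma input_prob_ge0 xs s1 : 0 <= input_prob xs s1.
Proof. exact: mulr_ge0 (markov_prob_ge0 PX1_pmf Q_stochastic _) (PS1_pmf.1 s1). Qed.

Lemma Pf_ge0 (w : traj mx my ms T) : 0 <= P w.
Proof.
case: w => [[xs s1] ys]; rewrite PfE.
by rewrite mulr_ge0 ?input_prob_ge0 ?prodr_ge0 // => t _; exact: policy_kernel_ge0.
Qed.

Lemma sum_policy_kernel xs s1 : \sum_ys \prod_t policy_kernel xs s1 t ys = 1.
Proof.
apply: (sum_prod_causal _ _ [ffun=> ord0]) => [t v w vw|t u].
  have vw_lt (i : 'I_T) : (i < t)%N -> v i = w i by move/ltnW; exact: vw.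
  by rewrite /policy_kernel (eq_hist vw_lt) (eq_stateS _ _ vw_lt) vw.
have set_lt a (i : 'I_T) : (i < t)%N -> ffun_set u t a i = u i := ffun_set_lt u a.
rewrite -(f_policy (ltn_ord t) (size_hist u (ltnW (ltn_ord t))) (xs t) (stateS xs s1 u t)).2.1.
apply: eq_bigr => a _.
by rewrite /policy_kernel (eq_hist (set_lt a)) (eq_stateS _ _ (set_lt a)) ffunE eqxx.
Qed.

Lemma sum_traj (F : traj mx my ms T -> R) :
  \sum_w F w = \sum_xs \sum_s1 \sum_ys F (xs, s1, ys).
Proof. by rewrite pair_bigA pair_bigA; apply: eq_bigr => -[[]]. Qed.

Lemma sum_Pf_output xs s1 : \sum_ys P (xs, s1, ys) = input_prob xs s1.
Proof. by under eq_bigr do rewrite PfE; rewrite -big_distrr /= sum_policy_kernel mulr1. Qed.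

Lemma Pf_marginal_input xs s1 : \sum_(w | w.1 == (xs, s1)) P w = input_prob xs s1.
Proof.
transitivity (\sum_(p | p == (xs, s1)) \sum_(ys | true) P (p, ys)).
  by rewrite pair_big_dep; apply: eq_big => -[p ys] /=; rewrite ?andbT.
by rewrite big_pred1_eq sum_Pf_output.
Qed.

Lemma Pf_marginal_output (ys : {ffun 'I_T -> Y}) : \sum_(w | w.2 == ys) P w = PY T ys.
Proof. by apply: eq_bigl => w; rewrite eq_histT. Qed.

Lemma sum_Pf : \sum_w P w = 1.
Proof.
rewrite sum_traj -(sum_markov_prob T PX1_pmf Q_stochastic); apply: eq_bigr => xs _.
by under eq_bigr do rewrite sum_Pf_output; rewrite -big_distrr /= PS1_pmf.2 mulr1.
Qed.

Lemma PY_prefix0 (ys : {ffun 'I_T -> Y}) : PY 0 ys = 1.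
Proof. by rewrite -sum_Pf; apply: eq_bigl => w; rewrite !hist0 eqxx. Qed.

Lemma PY_prefix_gt0 (w : traj mx my ms T) t : 0 < P w -> 0 < PY t w.2.
Proof.
move=> Pw_gt0; rewrite /PY_prefix (bigD1 w) //=.
by apply: ltr_pwDl Pw_gt0 _; apply: sumr_ge0 => v _; exact: Pf_ge0.
Qed.

Lemma Pf_gt0_factors xs s1 ys : 0 < P (xs, s1, ys) ->
  0 < input_prob xs s1 /\ forall t, 0 < policy_kernel xs s1 t ys.
Proof.
rewrite PfE => Pw_gt0.
have input_gt0 : 0 < input_prob xs s1.
  move: Pw_gt0; have := input_prob_ge0 xs s1.
  by rewrite le_eqVlt => /orP[/eqP <-|//]; rewrite mul0r ltxx.
split=> // t; apply: (@prodr_gt0_factor _ _ (policy_kernel xs s1^~ ys)).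
  by move=> i; exact: policy_kernel_ge0.
by rewrite -(pmulr_rgt0 _ input_gt0).
Qed.

Lemma sum_cost_telescope xs s1 ys : 0 < P (xs, s1, ys) ->
  \sum_(t < T) cost PX1 Q PS1 f t (xs, s1, ys)
  = \sum_(t < T) ln (policy_kernel xs s1 t ys) - ln (PY T ys).
Proof.
move=> Pw_gt0; have PY_gt0 t := PY_prefix_gt0 t Pw_gt0.
have [_ kernel_gt0] := Pf_gt0_factors Pw_gt0.
under eq_bigr => t _ do rewrite /cost -/(policy_kernel _ _ _ _) !ln_div ?posrE ?divr_gt0 //.
rewrite sumrB -(big_mkord xpredT (fun t => ln (PY t.+1 ys) - ln (PY t ys))).
by rewrite telescope_sumr // PY_prefix0 ln1 subr0.
Qed.

Lemma mutual_info_Pf :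
  mutual_info P = \sum_w (if 0 < P w then P w * \sum_(t < T) cost PX1 Q PS1 f t w else 0).
Proof.
apply: eq_bigr => -[[xs s1] ys] _; case: ifPn => // Pw_gt0; congr (_ * _).
have [input_gt0 kernel_gt0] := Pf_gt0_factors Pw_gt0.
rewrite Pf_marginal_input Pf_marginal_output sum_cost_telescope // PfE.
have PY_gt0 := PY_prefix_gt0 T Pw_gt0.
rewrite /= -mulf_div divff ?gt_eqF // mul1r ln_div ?posrE ?prodr_gt0 //.
by rewrite ln_prod.
Qed.

End DecisionPolicy.

Theorem proposition2 (R : realType) (mx my ms T : nat) (hxy : (mx <= my)%N)
    (hT : (0 < T)%N)
    (PX1 : 'I_mx.+1 -> R) (Q : 'I_mx.+1 -> 'I_mx.+1 -> R) (PS1 : 'I_ms.+1 -> R)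
    (hPX1 : is_pmf PX1) (hQ : stochastic Q) (hPS1 : is_pmf PS1) :
  (forall q : nat -> 'I_mx.+1 -> 'I_ms.+1 -> seq 'I_my.+1 -> 'I_my.+1 -> R,
     in_QB T q ->
     Ltilde_T T PX1 Q PS1 (fun t h => fun x s y => q t x s h y) = L_T T PX1 Q PS1 q) /\
  (forall f : nat -> seq 'I_my.+1 -> ('I_mx.+1 -> 'I_ms.+1 -> 'I_my.+1 -> R),
     decision_policy T f ->
     L_T T PX1 Q PS1 (fun t x s h y => f t h x s y) = Ltilde_T T PX1 Q PS1 f).
Proof.
split=> [q q_QB|f f_policy]; rewrite /Ltilde_T /L_T.
  have q_policy : decision_policy T (fun t h x s y => q t x s h y) := q_QB.
  by rewrite (mutual_info_Pf hPX1 hQ hPS1 q_policy).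
by rewrite (mutual_info_Pf hPX1 hQ hPS1 f_policy).
Qed.
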